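(* Let $\chi$ be a countable set and let $B \ge 1$ be an integer. Let $s:\{1,2,\dots,B\} \to (0,\infty)$ be an injective function. Then there exists a function $f:\chi\to\mathbb{R}$ such that the map $$h(X) = s(|X|)\cdot \frac{1}{|X|}\sum_{x \in X} f(x)$$ (the sum taken with multiplicity) is injective on the set of all nonempty finite multisets $X$ of elements of $\chi$ with $|X| \le B$.
   Context: $|X|$ denotes the cardinality of the multiset $X$ counted with multiplicity (the neighbourhood size / node degree). The map $h$ is the mean aggregator of $f$ composed with the degree-scaler $s$; the positivity assumption on $s$ can always be achieved from an arbitrary injective scaler by adding a constant (an affine shift), which preserves injectivity. The special case $s(d)=d$ gives the sum aggregator $\sum_{x\in X} f(x)$. *)

From HB Require Import structures.
From mathcomp Require Import all_boot all_order all_algebra.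
From mathcomp Require Import reals.
Set Implicit Arguments. Unset Strict Implicit. Unset Printing Implicit Defensive.
Import Order.TTheory GRing.Theory Num.Theory.
Local Open Scope ring_scope.

(* A finite multiset over chi is represented by a sequence, up to permutation
   (perm_eq).  Its cardinality with multiplicity is [size X]. *)

Definition scaled_mean_agg (R : realType) (chi : Type)
    (s : nat -> R) (f : chi -> R) (X : seq chi) : R :=
  s (size X) * ((size X)%:R)^-1 * \sum_(x <- X) f x.

From HB Require Import structures.
From mathcomp Require Import all_boot all_order all_algebra.
From mathcomp Require Import reals ring lra zify.
Set Implicit Arguments. Unset Strict Implicit. Unset Printing Implicit Defensive.
Import Order.TTheory GRing.Theory Num.Theory.
Local Open Scope ring_scope.

(* Enumerate chi by [pickle] and give x the weight code x = r^(pickle x + 1)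
   with r = 1/(B+1).  Since no element occurs more than B times, the sum of
   the weights of a multiset is a base-(B+1) expansion whose digits are the
   multiplicities, so it determines the multiset (code_sum_inj; the proof
   peels off the element of least pickle, using a digit-uniqueness fact).
   The feature map is f x = T + code x for a large constant T: then
   h(X) = s(|X|) T + (s(|X|)/|X|) sum code, the second summand lying in
   [0, s(|X|)].  T is chosen so that T |s i - s j| exceeds |s i| + |s j|
   for all i, j <= B with s i <> s j, which makes multisets of different
   sizes give different values (offset_separation); for equal sizes the
   factor s(|X|)/|X| cancels and code_sum_inj concludes. *)

Lemma sum_count_split (R : nmodType) (T : eqType) (F : T -> R) (x0 : T)
    (X : seq T) :
  \sum_(x <- X) F x =
  F x0 *+ count_mem x0 X + \sum_(x <- [seq y <- X | y != x0]) F x.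
Proof.
rewrite (bigID (pred1 x0)) big_filter /=; congr (_ + _).
rewrite (eq_bigr (fun=> F x0)) => [|x /eqP -> //].
by rewrite big_const_seq iter_addr_0.
Qed.

Lemma filter_pred1_nseq (T : eqType) (x0 : T) (X : seq T) :
  [seq x <- X | x == x0] = nseq (count_mem x0 X) x0.
Proof.
by elim: X => [|y X IH] //=; rewrite IH eq_sym; case: eqVneq => [->|].
Qed.

Lemma perm_split (T : eqType) (x0 : T) (X Y : seq T) :
  count_mem x0 X = count_mem x0 Y ->
  perm_eq [seq x <- X | x != x0] [seq x <- Y | x != x0] -> perm_eq X Y.
Proof.
move=> eq_cnt perm_rest.
rewrite -(perm_filterC (pred1 x0) X) perm_sym -(perm_filterC (pred1 x0) Y).
by rewrite perm_sym !filter_pred1_nseq eq_cnt perm_cat2l.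
Qed.

Lemma exists_min_pickle (T : countType) (X : seq T) : X != [::] ->
  exists2 x0, x0 \in X & forall y, y \in X -> (pickle x0 <= pickle y)%N.
Proof.
case: X => [|x X] // _.
have ex_code : exists k, has (fun y => pickle y == k) (x :: X).
  by exists (pickle x); rewrite /= eqxx.
case: (ex_minnP ex_code) => k /hasP [x0 x0X /eqP <-] min_k.
by exists x0 => // y yX; apply: min_k; apply/hasP; exists y.
Qed.

Lemma digit_unique (R : realDomainType) (a b : nat) (delta u v : R) :
  0 <= u < delta -> 0 <= v < delta ->
  delta *+ a + u = delta *+ b + v -> a = b.
Proof.
wlog lt_ab : a b u v / (a < b)%N.
  move=> wlog_lt hu hv eq_ab; case: (ltngtP a b) => [lt|lt|//].
  - exact: wlog_lt hu hv eq_ab.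
  - by apply/esym; apply: wlog_lt hv hu (esym eq_ab).
move=> /andP [u_ge0 u_lt] /andP [v_ge0 _] eq_ab; exfalso.
have delta_ge0 : 0 <= delta by exact: le_trans u_ge0 (ltW u_lt).
have : delta *+ a.+1 <= delta *+ b by exact: ler_wpMn2l.
rewrite mulrS => ge_b; lra.
Qed.

Lemma offset_separation (R : realDomainType) (sigma tau T u v : R) :
  0 <= u <= sigma -> 0 <= v <= tau ->
  `|sigma| + `|tau| < T * `|sigma - tau| -> sigma * T + u != tau * T + v.
Proof.
move=> /andP [u_ge0 u_le] /andP [v_ge0 v_le] big_T; apply/eqP => eq_st.
have : T * `|sigma - tau| <= `|(sigma - tau) * T|.
  by rewrite normrM mulrC ler_wpM2l ?real_ler_norm ?num_real.
have -> : (sigma - tau) * T = v - u by rewrite mulrBl; lra.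
move=> le_norm; have := ler_normB v u.
rewrite (ger0_norm u_ge0) (ger0_norm v_ge0) => tri.
have := ler_norm sigma; have := ler_norm tau; lra.
Qed.

Lemma finite_upper_bound (R : realDomainType) (I : finType) (F : I -> R) :
  exists M, forall i, F i <= M.
Proof.
exists (\sum_i `|F i|) => i; apply: le_trans (ler_norm _) _.
by rewrite (bigD1 i) //= lerDl sumr_ge0.
Qed.

Section Code.
Variables (R : realFieldType) (chi : countType) (B : nat).

Let r : R := (B.+1)%:R^-1.

Definition code (x : chi) : R := r ^+ (pickle x).+1.

Lemma r_gt0 : 0 < r. Proof. by rewrite invr_gt0 ltr0n. Qed.

Lemma r_le1 : r <= 1. Proof. by rewrite invf_le1 ?ltr0n // ler1n. Qed.

Lemma code_gt0 x : 0 < code x. Proof. by rewrite exprn_gt0 // r_gt0. Qed.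

Lemma code_le1 x : code x <= 1.
Proof. by rewrite exprn_ile1 ?r_le1 // ltW // r_gt0. Qed.

Lemma sum_code_ge0 (X : seq chi) : 0 <= \sum_(x <- X) code x.
Proof. by apply: sumr_ge0 => x _; apply: ltW; apply: code_gt0. Qed.

Lemma sum_code_le_size (X : seq chi) : \sum_(x <- X) code x <= (size X)%:R.
Proof.
by rewrite -sum1_size natr_sum ler_sum // => x _; apply: code_le1.
Qed.

Lemma code_tail_lt (x0 : chi) (Z : seq chi) : (size Z <= B)%N ->
  (forall x, x \in Z -> (pickle x0 < pickle x)%N) ->
  \sum_(x <- Z) code x < code x0.
Proof.
move=> size_Z later.
have step : forall x, x \in Z -> code x <= r * code x0.
  move=> x /later lt_x; rewrite /code -exprS.
  by apply: ler_wiXn2l; rewrite ?r_le1 // ltW // r_gt0.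
apply: (le_lt_trans (y := (r * code x0) *+ B)).
  apply: le_trans (_ : _ <= \sum_(x <- Z) r * code x0) _.
    by rewrite !big_seq; apply: ler_sum => x /step.
  rewrite big_const_seq iter_addr_0 count_predT ler_wpMn2l //.
  by rewrite mulr_ge0 // ltW ?r_gt0 ?code_gt0.
rewrite -mulr_natl mulrA gtr_pMl ?code_gt0 //.
by rewrite ltr_pdivrMr ?ltr0n // mul1r ltr_nat.
Qed.

Lemma code_sum_inj n (X Y : seq chi) : (size X + size Y <= n)%N ->
  (size X <= B)%N -> (size Y <= B)%N ->
  \sum_(x <- X) code x = \sum_(x <- Y) code x -> perm_eq X Y.
Proof.
elim: n X Y => [|n IH] X Y; first by case: X; case: Y.
move=> size_XY size_X size_Y eq_sum.
have [XY0|XYn0] := eqVneq (X ++ Y) [::].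
  by case: X Y XY0 {size_XY size_X size_Y eq_sum} => [|//] [|//].
have [x0 x0_XY min_x0] := exists_min_pickle XYn0.
pose rest Z := [seq x <- Z | x != x0].
have rest_lt : forall Z, {subset Z <= X ++ Y} -> (size Z <= B)%N ->
    0 <= \sum_(x <- rest Z) code x < code x0.
  move=> Z sub_Z size_Z; rewrite sum_code_ge0 code_tail_lt //.
    by rewrite size_filter (leq_trans (count_size _ _)).
  move=> x; rewrite mem_filter => /andP [x_ne x_Z].
  rewrite ltn_neqAle min_x0 ?sub_Z // andbT.
  by apply: contra x_ne => /eqP /(pcan_inj pickleK) ->.
have rest_X : 0 <= \sum_(x <- rest X) code x < code x0.
  by apply: rest_lt size_X => x xX; rewrite mem_cat xX.
have rest_Y : 0 <= \sum_(x <- rest Y) code x < code x0.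
  by apply: rest_lt size_Y => x xY; rewrite mem_cat xY orbT.
rewrite (sum_count_split code x0 X) (sum_count_split code x0 Y) in eq_sum.
have eq_cnt := digit_unique rest_X rest_Y eq_sum.
move: eq_sum; rewrite eq_cnt => /addrI eq_rest.
have size_split Z : size Z = (count_mem x0 Z + size [seq y <- Z | y != x0])%N.
  by rewrite size_filter count_predC.
have cnt_pos : (0 < count_mem x0 X)%N.
  have : (0 < count_mem x0 (X ++ Y))%N by rewrite -has_count has_pred1.
  by rewrite count_cat -eq_cnt addnn double_gt0.
have perm_rest : perm_eq (rest X) (rest Y).
  apply: IH eq_rest.
  - move: size_XY cnt_pos; rewrite (size_split X) (size_split Y) -eq_cnt.
    by move: (count_mem _ _) (size _) (size _) => c a b; lia.
  - by rewrite (leq_trans _ size_X) // (size_split X) leq_addl.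
  - by rewrite (leq_trans _ size_Y) // (size_split Y) leq_addl.
exact: perm_split eq_cnt perm_rest.
Qed.

End Code.

Lemma scaled_mean_agg_shift (R : realType) (chi : Type) (s : nat -> R)
    (c : R) (g : chi -> R) (X : seq chi) : (0 < size X)%N ->
  scaled_mean_agg s (fun x => c + g x) X =
  s (size X) * c + s (size X) / (size X)%:R * \sum_(x <- X) g x.
Proof.
move=> size_X; rewrite /scaled_mean_agg big_split /= big_const_seq.
rewrite iter_addr_0 count_predT -mulr_natl; field.
by rewrite pnatr_eq0 -lt0n.
Qed.

Lemma scaled_mean_bound (R : realFieldType) (sigma S : R) (n : nat) :
  (0 < n)%N -> 0 < sigma -> 0 <= S <= n%:R -> 0 <= sigma / n%:R * S <= sigma.
Proof.
move=> n_gt0 sigma_gt0 /andP [S_ge0 S_le].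
have n_pos : 0 < n%:R :> R by rewrite ltr0n.
apply/andP; split; first by rewrite mulr_ge0 // divr_ge0 // ltW.
by rewrite mulrAC ler_pdivrMr // ler_wpM2l // ltW.
Qed.

Theorem theorem2 (R : realType) (chi : countType) (B : nat) (s : nat -> R) :
  (1 <= B)%N ->
  (forall i j : nat, (1 <= i <= B)%N -> (1 <= j <= B)%N -> s i = s j -> i = j) ->
  (forall i : nat, (1 <= i <= B)%N -> 0 < s i) ->
  exists f : chi -> R,
    forall X Y : seq chi,
      (0 < size X)%N -> (size X <= B)%N ->
      (0 < size Y)%N -> (size Y <= B)%N ->
      scaled_mean_agg s f X = scaled_mean_agg s f Y -> perm_eq X Y.
Proof.
move=> _ s_inj s_pos.
have [T T_big] := finite_upper_bound
  (fun ij : 'I_B.+1 * 'I_B.+1 =>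
     (`|s ij.1| + `|s ij.2| + 1) / `|s ij.1 - s ij.2|).
exists (fun x => T + code R B x) => X Y X_gt0 X_le Y_gt0 Y_le.
rewrite !scaled_mean_agg_shift //.
have sX_pos : 0 < s (size X) by rewrite s_pos ?X_gt0.
have sY_pos : 0 < s (size Y) by rewrite s_pos ?Y_gt0.
have [eq_size|ne_size] := eqVneq (size X) (size Y).
  have scale_nz : s (size X) / (size X)%:R != 0.
    by rewrite mulf_neq0 ?gt_eqF ?invr_gt0 ?ltr0n.
  rewrite -eq_size => /addrI /(mulfI scale_nz) eq_sum.
  by apply: (code_sum_inj (n := size X + size Y)) eq_sum.
have ne_s : s (size X) != s (size Y).
  by apply: contra ne_size => /eqP /s_inj -> //; rewrite ?X_gt0 ?Y_gt0.
have dist_gt0 : 0 < `|s (size X) - s (size Y)| by rewrite normr_gt0 subr_eq0.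
move=> /eqP; apply: contraLR => _; apply: offset_separation.
- by apply: scaled_mean_bound; rewrite ?sum_code_ge0 ?sum_code_le_size.
- by apply: scaled_mean_bound; rewrite ?sum_code_ge0 ?sum_code_le_size.
- have := T_big (Ordinal (X_le : (size X < B.+1)%N), Ordinal (Y_le : (size Y < B.+1)%N)).
  by rewrite ler_pdivrMr //=; lra.
Qed.
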